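(* For every integer $n\geq 2$, $$\frac{3}{2}\,WS(n-1) + 1 \leq WS^+(n) \leq WS(n).$$
   Context: A set $A \subseteq \mathbb{N}$ is sum-free if for all $(a,b)\in A^2$ (allowing $a=b$), $a+b \notin A$; it is weakly sum-free if for all $(a,b)\in A^2$ with $a\neq b$, $a+b\notin A$. $WS(n)$ is the largest $p$ such that $\{1,\dots,p\}$ can be partitioned into $n$ weakly sum-free subsets. For positive integers $a>b$, let $\pi(x) = (x \bmod a) + a\cdot \mathbb{1}_{\{0,\dots,b\}}(x \bmod a)$. For positive integers $a,n,b$ with $a>b$, a partition $(A_1,\dots,A_n)$ of $\{1,\dots,a+b\}$ is a $b$-WS-template with width $a$ and $n$ colors if: (i) every $A_i$ is weakly sum-free; (ii) every $A_i\setminus\{1,\dots,b\}$ is sum-free; (iii) for all $(x,y)\in A_n^2$, $x+y>b+2a$ implies $x+y-2a\notin A_n$; (iv) for all $i\in\{1,\dots,n-1\}$ and $(x,y)\in A_i^2$, $x+y>a+b$ implies $\pi(x+y)\notin A_i$. $WS^+_b(n)$ is the largest $a$ such that a $b$-WS-template with width $a$ and $n$ colors exists ($0$ if none), and $WS^+(n)=\max_{b\in\mathbb{N}^*} WS^+_b(n)$. *)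

From Stdlib Require Import Arith Lia ClassicalEpsilon.

(* [natmax P] is the largest natural number satisfying P, when such a
   largest element exists, and 0 otherwise. *)
Definition is_largest (P : nat -> Prop) (m : nat) : Prop :=
  P m /\ forall k, P k -> k <= m.

Definition natmax (P : nat -> Prop) : nat :=
  match excluded_middle_informative (exists m, is_largest P m) with
  | left h => proj1_sig (constructive_indefinite_description _ h)
  | right _ => 0
  end.

(* A partition (A_0,...,A_{n-1}) of {1,...,N} is encoded by a colouring
   c : nat -> nat with c x < n for 1 <= x <= N; A_i = {x in [1,N] | c x = i}. *)
Definition coloring (n N : nat) (c : nat -> nat) : Prop :=
  forall x, 1 <= x <= N -> c x < n.

Definition classes_weakly_sum_free (N : nat) (c : nat -> nat) : Prop :=
  forall x y, 1 <= x -> 1 <= y -> x <> y -> x + y <= N ->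
    c x = c y -> c (x + y) <> c x.

Definition WS_partitionable (n p : nat) : Prop :=
  exists c : nat -> nat, coloring n p c /\ classes_weakly_sum_free p c.

Definition WS (n : nat) : nat := natmax (WS_partitionable n).

Definition pi_ab (a b x : nat) : nat :=
  x mod a + (if x mod a <=? b then a else 0).

(* (A_1,...,A_n) with A_i = class of colour i-1; A_n = colour n-1. *)
Definition WS_template (b a n : nat) (c : nat -> nat) : Prop :=
  0 < b /\ b < a /\ 0 < n /\
  coloring n (a + b) c /\
  classes_weakly_sum_free (a + b) c /\
  (forall x y, b < x <= a + b -> b < y <= a + b -> x + y <= a + b ->
     c x = c y -> c (x + y) <> c x) /\
  (forall x y, 1 <= x <= a + b -> 1 <= y <= a + b ->
     c x = n - 1 -> c y = n - 1 -> x + y > b + 2 * a ->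
     c (x + y - 2 * a) <> n - 1) /\
  (forall i x y, i < n - 1 -> 1 <= x <= a + b -> 1 <= y <= a + b ->
     c x = i -> c y = i -> x + y > a + b ->
     c (pi_ab a b (x + y)) <> i).

Definition has_WS_template (b a n : nat) : Prop :=
  exists c : nat -> nat, WS_template b a n c.

Definition WSplus_b (b n : nat) : nat := natmax (fun a => has_WS_template b a n).

Definition WSplus (n : nat) : nat :=
  natmax (fun a => exists b, 0 < b /\ a = WSplus_b b n).

(* Upper bound: a template of width a is in particular a partition of
   {1,...,a+b} into n weakly sum-free classes, so a <= WS(n).  This needs WS(n)
   to be finite, a Schur-type Ramsey argument: greedily, by pigeonhole, one
   builds a long chain s_0 < s_1 < ... in which the colour of s_j - s_i (j > i)
   depends only on i; four indices of the same colour then give distinct x, y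
   with x, y, x + y all of that colour.
   Lower bound: colour {1,...,m}, m = WS(n-1), by an optimal partition into
   n-1 classes and {m+1,...,2m+1} by the new colour.  With b = floor(m/2) and
   a = 2m+1-b this is a b-WS-template, and 2a >= 3m+2. *)
From Stdlib Require Import Arith Bool Lia List ClassicalEpsilon.

Lemma natmax_spec (P : nat -> Prop) :
  (exists m, is_largest P m) -> is_largest P (natmax P).
Proof.
  intros h; unfold natmax.
  destruct (excluded_middle_informative _) as [h'|h']; [|contradiction].
  exact (proj2_sig (constructive_indefinite_description _ h')).
Qed.

Lemma bounded_has_largest (P : nat -> Prop) B p :
  (forall k, P k -> k <= B) -> P p -> exists m, is_largest P m.
Proof.
  revert p; induction B as [|B IH]; intros p HB Hp.
  - exists p; split; [exact Hp|]. intros k Hk; pose proof (HB k Hk); pose proof (HB p Hp); lia.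
  - destruct (excluded_middle_informative (P (S B))) as [HSB|HSB].
    + exists (S B); split; assumption.
    + apply (IH p); [|exact Hp]. intros k Hk.
      specialize (HB k Hk). destruct (Nat.eq_dec k (S B)); [subst; contradiction|lia].
Qed.

Lemma natmax_largest (P : nat -> Prop) B p :
  (forall k, P k -> k <= B) -> P p -> is_largest P (natmax P).
Proof. intros HB Hp; exact (natmax_spec P (bounded_has_largest P B p HB Hp)). Qed.

Lemma natmax_ge (P : nat -> Prop) B p :
  (forall k, P k -> k <= B) -> P p -> p <= natmax P.
Proof. intros HB Hp; exact (proj2 (natmax_largest P B p HB Hp) p Hp). Qed.

Lemma natmax_le (P : nat -> Prop) B :
  (forall k, P k -> k <= B) -> natmax P <= B.
Proof.
  intros HB; unfold natmax.
  destruct (excluded_middle_informative _) as [h|_]; [|lia].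
  exact (HB _ (proj1 (proj2_sig (constructive_indefinite_description _ h)))).
Qed.

Lemma filter_filter {A} (p q : A -> bool) l :
  filter p (filter q l) = filter (fun x => q x && p x) l.
Proof.
  induction l as [|x l IH]; simpl; [reflexivity|].
  destruct (q x); simpl; [destruct (p x)|]; rewrite ?IH; reflexivity.
Qed.

Lemma pigeonhole_fiber {A} (f : A -> nat) n L :
  Forall (fun w => f w <= n) L ->
  exists v, v <= n /\ length L <= S n * length (filter (fun w => f w =? v) L).
Proof.
  revert L; induction n as [|n IH]; intros L HL; rewrite Forall_forall in HL.
  - exists 0; split; [lia|].
    rewrite (filter_ext_in _ (fun _ => true)), filter_true; [lia|].
    intros w Hw; specialize (HL w Hw); apply Nat.eqb_eq; lia.
  - pose proof (filter_length (fun w => f w =? S n) L) as Hsplit.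
    set (rest := filter (fun w => negb (f w =? S n)) L) in Hsplit.
    set (top := filter (fun w => f w =? S n) L) in Hsplit.
    destruct (le_lt_dec (length L) (S (S n) * length top)) as [Htop|Htop].
    { exists (S n); split; [lia|exact Htop]. }
    destruct (IH rest) as [v [Hv Hrest]].
    { apply Forall_forall; intros w Hw; apply filter_In in Hw as [Hw Hne].
      specialize (HL w Hw); apply negb_true_iff, Nat.eqb_neq in Hne; lia. }
    assert (Hfiber : filter (fun w => f w =? v) rest = filter (fun w => f w =? v) L).
    { unfold rest; rewrite filter_filter; apply filter_ext; intros w.
      destruct (Nat.eqb_spec (f w) v), (Nat.eqb_spec (f w) (S n)); simpl; lia. }
    rewrite Hfiber in Hrest.
    exists v; split; [lia|nia].
Qed.

Lemma ForallOrdPairs_filter {A} (R : A -> A -> Prop) (p : A -> bool) l :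
  ForallOrdPairs R l -> ForallOrdPairs R (filter p l).
Proof.
  induction 1 as [|a l Ha _ IH]; simpl; [constructor|].
  destruct (p a); [|exact IH].
  constructor; [|exact IH].
  rewrite Forall_forall in *; intros x Hx; apply filter_In in Hx; exact (Ha x (proj1 Hx)).
Qed.

Lemma ForallOrdPairs_lt_seq start len : ForallOrdPairs lt (seq start len).
Proof.
  revert start; induction len as [|len IH]; intros start; simpl; constructor; [|apply IH].
  apply Forall_forall; intros x Hx; apply in_seq in Hx; lia.
Qed.

Definition difference_chain (c : nat -> nat) : list (nat * nat) -> Prop :=
  ForallOrdPairs (fun p q => fst p < fst q /\ c (fst q - fst p) = snd p).

Lemma difference_chain_cons c p L :
  difference_chain c (p :: L) <->
  Forall (fun q => fst p < fst q /\ c (fst q - fst p) = snd p) L /\ difference_chain c L.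
Proof. split; [intros H; inversion H; auto | intros [H1 H2]; constructor; auto]. Qed.

Fixpoint chain_bound (n k : nat) : nat :=
  match k with 0 => 0 | S k => n * chain_bound n k + 1 end.

Lemma difference_chain_exists c n N :
  coloring (S n) N c -> forall k xs,
  ForallOrdPairs lt xs -> Forall (fun x => x <= N) xs -> chain_bound (S n) k <= length xs ->
  exists L, difference_chain c L /\ length L = k /\
    Forall (fun p => In (fst p) xs /\ snd p <= n) L.
Proof.
  intros Hcol k; induction k as [|k IH]; intros xs Hsorted Hbound Hlen.
  { exists nil; repeat split; constructor. }
  destruct xs as [|s xs]; simpl in Hlen; [lia|].
  inversion Hsorted as [|? ? Hs Hsorted']; subst.
  apply Forall_cons_iff in Hbound as [_ Hbound].
  destruct (pigeonhole_fiber (fun w => c (w - s)) n xs) as [v [Hv Hfiber]].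
  { rewrite Forall_forall in *; intros w Hw.
    specialize (Hs w Hw); specialize (Hbound w Hw); specialize (Hcol (w - s)).
    simpl in Hs; lia. }
  set (F := filter (fun w => c (w - s) =? v) xs) in Hfiber.
  destruct (IH F) as [L [HL [HlenL HinL]]].
  - apply ForallOrdPairs_filter, Hsorted'.
  - rewrite Forall_forall in *; intros x Hx; apply filter_In in Hx.
    exact (Hbound x (proj1 Hx)).
  - nia.
  - exists ((s, v) :: L); split; [apply difference_chain_cons; split; [|exact HL]|split].
    + rewrite Forall_forall in *; intros q Hq.
      destruct (HinL q Hq) as [HqF _]; apply filter_In in HqF as [HqS Hcq].
      split; [exact (Hs _ HqS)|apply Nat.eqb_eq, Hcq].
    + simpl; lia.
    + constructor; [simpl; auto|].
      rewrite Forall_forall in *; intros q Hq; destruct (HinL q Hq) as [HqF Hqn].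
      apply filter_In in HqF; simpl; tauto.
Qed.

Lemma weakly_sum_free_no_difference_quadruple N c u v w z :
  classes_weakly_sum_free N c -> u < v -> v < w -> w < z -> z - u <= N ->
  c (w - u) = c (v - u) -> c (z - u) = c (v - u) ->
  c (w - v) = c (v - u) -> c (z - v) = c (v - u) -> False.
Proof.
  intros Hsf Huv Hvw Hwz HN Hwu Hzu Hwv Hzv.
  destruct (Nat.eq_dec (v - u) (w - v)) as [Heq|Hne].
  - apply (Hsf (v - u) (z - v)); try lia.
    replace (v - u + (z - v)) with (z - u) by lia; congruence.
  - apply (Hsf (v - u) (w - v)); try lia.
    replace (v - u + (w - v)) with (w - u) by lia; congruence.
Qed.

Lemma monochromatic_difference_chain_short N c v L :
  classes_weakly_sum_free N c -> difference_chain c L ->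
  Forall (fun p => snd p = v /\ fst p <= N) L -> length L < 4.
Proof.
  intros Hsf HL Hlab.
  destruct L as [|[u lu] [|[x lx] [|[w lw] [|[z lz] L]]]]; simpl; try lia.
  exfalso.
  rewrite !difference_chain_cons, !Forall_cons_iff in HL.
  rewrite !Forall_cons_iff in Hlab.
  simpl in HL, Hlab.
  destruct HL as [[[Hux Cux] [[Huw Cuw] [[Huz Cuz] _]]]
                  [[[Hxw Cxw] [[Hxz Cxz] _]] [[[Hwz _] _] _]]].
  destruct Hlab as [[-> _] [[-> _] [_ [[_ HzN] _]]]].
  apply (weakly_sum_free_no_difference_quadruple N c u x w z); auto; try lia; congruence.
Qed.

Lemma weakly_sum_free_bound n p c :
  coloring (S n) p c -> classes_weakly_sum_free p c ->
  p < chain_bound (S n) (3 * S n + 1).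
Proof.
  intros Hcol Hsf.
  destruct (le_lt_dec (chain_bound (S n) (3 * S n + 1)) p) as [Hp|Hp]; [exfalso|exact Hp].
  destruct (difference_chain_exists c n p Hcol (3 * S n + 1) (seq 0 (S p)))
    as [L [HL [HlenL HinL]]].
  - apply ForallOrdPairs_lt_seq.
  - apply Forall_forall; intros x Hx; apply in_seq in Hx; lia.
  - rewrite length_seq; lia.
  - destruct (pigeonhole_fiber snd n L) as [v [_ Hfiber]].
    { rewrite Forall_forall in *; intros q Hq; apply HinL, Hq. }
    assert (Hshort : length (filter (fun q => snd q =? v) L) < 4).
    { apply (monochromatic_difference_chain_short p c v); [exact Hsf| |].
      - apply ForallOrdPairs_filter, HL.
      - rewrite Forall_forall in *; intros q Hq; apply filter_In in Hq as [Hq Hqv].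
        destruct (HinL q Hq) as [Hqs _]; apply in_seq in Hqs.
        split; [apply Nat.eqb_eq, Hqv|lia]. }
    nia.
Qed.

Lemma WS_partitionable_bounded n p :
  0 < n -> WS_partitionable n p -> p <= chain_bound n (3 * n + 1).
Proof.
  intros Hn [c [Hcol Hsf]]; destruct n as [|n]; [lia|].
  apply Nat.lt_le_incl, (weakly_sum_free_bound n p c Hcol Hsf).
Qed.

Lemma WS_partitionable_le_two n p : 0 < n -> p <= 2 -> WS_partitionable n p.
Proof.
  intros Hn Hp; exists (fun _ => 0); split.
  - intros x _; exact Hn.
  - intros x y Hx Hy Hne Hxy; lia.
Qed.

Lemma WS_partitionable_WS n : 0 < n -> WS_partitionable n (WS n).
Proof.
  intros Hn; refine (proj1 (natmax_largest _ (chain_bound n (3 * n + 1)) 0 _ _)).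
  - intros k; apply WS_partitionable_bounded, Hn.
  - apply WS_partitionable_le_two; lia.
Qed.

Lemma WS_partitionable_le_WS n p : 0 < n -> WS_partitionable n p -> p <= WS n.
Proof.
  intros Hn; apply (natmax_ge _ (chain_bound n (3 * n + 1))).
  intros k; apply WS_partitionable_bounded, Hn.
Qed.

Lemma template_le_WS b a n : has_WS_template b a n -> a + b <= WS n.
Proof.
  intros [c (_ & _ & Hn & Hcol & Hsf & _)].
  apply WS_partitionable_le_WS; [exact Hn|exists c; auto].
Qed.

Lemma WSplus_b_le_WS b n : WSplus_b b n <= WS n.
Proof. apply natmax_le; intros a Ha; apply template_le_WS in Ha; lia. Qed.

Lemma WSplus_le_WS n : WSplus n <= WS n.
Proof. apply natmax_le; intros a [b [_ ->]]; apply WSplus_b_le_WS. Qed.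

Lemma template_le_WSplus b a n : 0 < b -> has_WS_template b a n -> a <= WSplus n.
Proof.
  intros Hb Ht.
  apply (Nat.le_trans _ (WSplus_b b n)).
  - apply (natmax_ge _ (WS n)); [|exact Ht].
    intros k Hk; apply template_le_WS in Hk; lia.
  - apply (natmax_ge _ (WS n)); [intros k [b' [_ ->]]; apply WSplus_b_le_WS|].
    exists b; auto.
Qed.

Section TemplateFromPartition.

Variables (k m : nat) (c0 : nat -> nat).
Hypotheses (Hm : 2 <= m) (Hcol : coloring k m c0) (Hsf : classes_weakly_sum_free m c0).

Definition extend_coloring (x : nat) : nat := if x <=? m then c0 x else k.

Lemma extend_coloring_cases x : 1 <= x ->
  (x <= m /\ extend_coloring x = c0 x /\ c0 x < k) \/ (m < x /\ extend_coloring x = k).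
Proof.
  intros Hx; unfold extend_coloring.
  destruct (Nat.leb_spec x m); [left; split; [|split]; auto; apply Hcol; lia|right; auto].
Qed.

Lemma extend_coloring_template :
  WS_template (m / 2) (2 * m + 1 - m / 2) (S k) extend_coloring.
Proof.
  pose proof (Nat.div_mod_eq m 2); pose proof (Nat.mod_upper_bound m 2 ltac:(lia)).
  set (b := m / 2) in *.
  unfold WS_template.
  replace (2 * m + 1 - b + b) with (2 * m + 1) by lia.
  replace (S k - 1) with k by lia.
  split; [lia|split; [lia|split; [lia|split; [|split; [|split; [|split]]]]]].
  - intros x Hx; destruct (extend_coloring_cases x) as [(_ & -> & ?)|(_ & ->)]; lia.
  - intros x y Hx Hy Hne Hs Heq.
    destruct (extend_coloring_cases x Hx) as [(? & Ex & ?)|(? & Ex)],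
             (extend_coloring_cases y Hy) as [(? & Ey & ?)|(? & Ey)];
      rewrite Ex, Ey in *; try lia.
    destruct (extend_coloring_cases (x + y)) as [(? & -> & ?)|(? & ->)]; [lia| |lia].
    apply Hsf; assumption.
  - (* x, y > b forces x + y > m, so x + y carries the new colour. *)
    intros x y Hx Hy Hs Heq.
    destruct (extend_coloring_cases x) as [(? & Ex & ?)|(? & Ex)],
             (extend_coloring_cases y) as [(? & Ey & ?)|(? & Ey)];
      try lia; rewrite Ex, Ey in *; try lia.
    destruct (extend_coloring_cases (x + y)) as [(? & -> & ?)|(? & ->)]; lia.
  - (* x + y - 2a lies in (b, 2b], inside {1,...,m}. *)
    intros x y Hx Hy Ex Ey Hs.
    destruct (extend_coloring_cases x) as [(? & ? & ?)|(? & _)]; [lia|lia| ].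
    destruct (extend_coloring_cases y) as [(? & ? & ?)|(? & _)]; [lia|lia| ].
    destruct (extend_coloring_cases (x + y - 2 * (2 * m + 1 - b)))
      as [(? & -> & ?)|(? & _)]; lia.
  - (* Vacuous: the old classes lie in {1,...,m}, so x + y <= 2m < a + b. *)
    intros i x y Hi Hx Hy Ex Ey Hs.
    destruct (extend_coloring_cases x) as [(? & _ & _)|(? & ?)]; [lia| |lia].
    destruct (extend_coloring_cases y) as [(? & _ & _)|(? & ?)]; lia.
Qed.

End TemplateFromPartition.

Theorem proposition3p16 (n : nat) (hn : 2 <= n) :
  3 * WS (n - 1) + 2 <= 2 * WSplus n /\ WSplus n <= WS n.
Proof.
  split; [|apply WSplus_le_WS].
  set (m := WS (n - 1)).
  destruct (WS_partitionable_WS (n - 1)) as [c0 [Hcol Hsf]]; [lia|].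
  assert (Hm : 2 <= m) by (apply WS_partitionable_le_WS, WS_partitionable_le_two; lia).
  assert (Ht : has_WS_template (m / 2) (2 * m + 1 - m / 2) n).
  { exists (extend_coloring (n - 1) m c0).
    replace n with (S (n - 1)) at 1 by lia.
    apply extend_coloring_template; assumption. }
  apply template_le_WSplus in Ht; [|apply Nat.div_str_pos; lia].
  pose proof (Nat.div_mod_eq m 2); pose proof (Nat.mod_upper_bound m 2 ltac:(lia)).
  lia.
Qed.
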